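(* Let $c>0$ be an integer and $\mu,\nu\in\mathbb R$, and let $D=D^{\mu,\nu}_c$ be the quantum Heisenberg manifold. For every $n\in\mathbb Z$ there exist $\xi_1^n,\xi_2^n\in D^{(n)}$ such that $$(\xi_1^n)^*\xi_1^n+(\xi_2^n)^*\xi_2^n=1,\qquad \xi_1^n(\xi_1^n)^*+\xi_2^n(\xi_2^n)^*=1.$$ Furthermore, $\xi_1^n$ and $\xi_2^n$ can be chosen to be smooth functions.
   Context: Write $e(x)=e^{2\pi ix}$. Let $D_0$ be the space of functions $F:\mathbb R\times S^1\times\mathbb Z\to\mathbb C$, $(x,y,p)\mapsto F(x,y,p)$, such that $p\mapsto F(\cdot,\cdot,p)$ is finitely supported with values in bounded continuous functions on $\mathbb R\times S^1$, and $F(x+1,y,p)=e(-cp(y-p\nu))F(x,y,p)$. It is a $*$-algebra with product $(F_1\cdot F_2)(x,y,p)=\sum_{q\in\mathbb Z}F_1(x,y,q)F_2(x-2q\mu,y-2q\nu,p-q)$ and involution $F^*(x,y,p)=\overline{F(x-2p\mu,y-2p\nu,-p)}$. The quantum Heisenberg manifold $D^{\mu,\nu}_c$ (Rieffel) is the C*-completion of $D_0$. For $n\in\mathbb Z$, $D^{(n)}$ denotes the set of elements of the form $F(x,y,p)=\delta_{n,p}f(x,y)$ with $f$ continuous on $\mathbb R\times S^1$ and $f(x+1,y)=e(-cn(y-n\nu))f(x,y)$ (the $n$-th spectral subspace of the gauge action); the unit $1$ is the function $\delta_{0,p}$. *)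

From Stdlib Require Import Reals ZArith List ClassicalEpsilon.
From Coquelicot Require Import Coquelicot.
Open Scope R_scope.

Definition qh_e (t : R) : C := (cos (2 * PI * t), sin (2 * PI * t)).

(** Elements of (the ambient space of) D_0: functions F : R x S^1 x Z -> C,
    with S^1 = R/Z encoded by 1-periodicity in y. *)
Definition HFun := R -> R -> Z -> C.

Definition qh_continuous2 (g : R -> R -> C) : Prop :=
  forall x y, continuous (fun z : R * R => g (fst z) (snd z)) (x, y).

Definition qh_in_D0 (c : Z) (nu : R) (F : HFun) : Prop :=
  (exists N : nat, forall x y q, (Z.of_nat N < Z.abs q)%Z -> F x y q = 0%C) /\
  (forall p, qh_continuous2 (fun x y => F x y p)) /\
  (forall p, exists M, forall x y, Cmod (F x y p) <= M) /\
  (forall x y p, F x (y + 1) p = F x y p) /\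
  (forall x y p, F (x + 1) y p =
     Cmult (qh_e (- IZR c * IZR p * (y - IZR p * nu))) (F x y p)).

Definition qh_supp_bound (F : HFun) : nat :=
  epsilon (inhabits 0%nat)
    (fun N => forall x y q, (Z.of_nat N < Z.abs q)%Z -> F x y q = 0%C).

Definition qh_zsum (N : nat) (a : Z -> C) : C :=
  fold_right Cplus 0%C
    (map (fun k => a (Z.of_nat k - Z.of_nat N)%Z) (seq 0 (2 * N + 1))).

(** The sum is over all q in Z; since F1 is finitely supported it equals the
    sum over the window [-qh_supp_bound F1, qh_supp_bound F1]. *)
Definition qh_mul (mu nu : R) (F1 F2 : HFun) : HFun :=
  fun x y p => qh_zsum (qh_supp_bound F1)
    (fun q => Cmult (F1 x y q)
                    (F2 (x - 2 * IZR q * mu) (y - 2 * IZR q * nu) (p - q)%Z)).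

Definition qh_add (F1 F2 : HFun) : HFun := fun x y p => Cplus (F1 x y p) (F2 x y p).

Definition qh_star (mu nu : R) (F : HFun) : HFun :=
  fun x y p => Cconj (F (x - 2 * IZR p * mu) (y - 2 * IZR p * nu) (- p)%Z).

Definition qh_one : HFun := fun _ _ p => if Z.eqb p 0 then 1%C else 0%C.

Definition qh_in_Dn (c : Z) (nu : R) (n : Z) (F : HFun) : Prop :=
  qh_in_D0 c nu F /\ (forall x y p, p <> n -> F x y p = 0%C).

Fixpoint qh_Ck (k : nat) (g : R -> R -> R) : Prop :=
  (forall x y, continuous (fun z : R * R => g (fst z) (snd z)) (x, y)) /\
  match k with
  | O => True
  | S k' => exists g1 g2 : R -> R -> R,
      (forall x y, is_derive (fun t => g t y) x (g1 x y)) /\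
      (forall x y, is_derive (fun t => g x t) y (g2 x y)) /\
      qh_Ck k' g1 /\ qh_Ck k' g2
  end.

Definition qh_smooth (f : R -> R -> C) : Prop :=
  forall k, qh_Ck k (fun x y => fst (f x y)) /\ qh_Ck k (fun x y => snd (f x y)).

From Stdlib Require Import Reals ZArith.
From Coquelicot Require Import Coquelicot.
From Stdlib Require Import Lra Lia FunctionalExtensionality List ClassicalEpsilon.
Open Scope R_scope.

(* Take [xi_1(x,y,p) = delta_{p,n} u_1(x) e(c n^2 nu x - c n floor(x) y)] and
   [xi_2(x,y,p) = delta_{p,n} u_2(x) e(c n^2 nu x - c n floor(x + 1/2) y)], where
   [u_1 = cos(pi/2 w)], [u_2 = sin(pi/2 w)] for a smooth 1-periodic [w] equal to [1]
   near the integers and to [0] near the half-integers.  The jumps of the floors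
   happen where the corresponding [u_i] vanishes identically, so the [xi_i] are
   smooth, and the increment of the floor under [x -> x + 1] produces exactly the
   twist [e(-c n (y - n nu))] required in [D^(n)].  Products of elements of
   degree [n] and [-n] are concentrated in degree [0], where both relations reduce
   to [u_1^2 + u_2^2 = 1]. *)

Lemma locally_of_ball (x eps : R) (P : R -> Prop) : 0 < eps ->
  (forall t, Rabs (t - x) < eps -> P t) -> locally x P.
Proof. intros He H. exists (mkposreal eps He). exact H. Qed.

Lemma is_derive_eq (f : R -> R) (x l l' : R) :
  is_derive f x l -> l = l' -> is_derive f x l'.
Proof. now intros H <-. Qed.

(** * A flat function *)

Definition flat (j : nat) (x : R) : R :=
  if Rlt_dec 0 x then exp (- / x) / x ^ j else 0.

Lemma flat_nonpos j x : x <= 0 -> flat j x = 0.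
Proof. intros H. unfold flat. destruct (Rlt_dec 0 x); lra. Qed.

Lemma flat_pos j x : 0 < x -> 0 < flat j x.
Proof.
  intros H. unfold flat. destruct (Rlt_dec 0 x); [|lra].
  apply Rdiv_lt_0_compat; [apply exp_pos | apply pow_lt; lra].
Qed.

Lemma flat_ge0 j x : 0 <= flat j x.
Proof.
  destruct (Rlt_dec 0 x); [apply Rlt_le, flat_pos; lra | rewrite flat_nonpos; lra].
Qed.

Lemma sum_f_R0_ge_last (f : nat -> R) n :
  (forall k, 0 <= f k) -> f n <= sum_f_R0 f n.
Proof.
  intros Hf. assert (Hsum : forall m, 0 <= sum_f_R0 f m).
  { induction m; simpl; [apply Hf | specialize (Hf (S m)); lra]. }
  destruct n; simpl; [lra|]. specialize (Hsum n). lra.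
Qed.

Lemma pow_div_fact_le_exp t n : 0 <= t -> t ^ n / INR (fact n) <= exp t.
Proof.
  intros Ht. eapply Rle_trans; [| apply (exp_ge_taylor t n Ht)].
  apply (sum_f_R0_ge_last (fun k => t ^ k / INR (fact k))). intros k.
  apply Rdiv_le_0_compat; [apply pow_le; lra | apply INR_fact_lt_0].
Qed.

(* Uses [exp (1/h) >= h^-(j+2) / (j+2)!]. *)
Lemma flat_le_sqr j h : 0 < h -> flat j h <= INR (fact (j + 2)) * h ^ 2.
Proof.
  intros Hh. unfold flat. destruct (Rlt_dec 0 h); [|lra].
  set (K := INR (fact (j + 2))).
  assert (HK : 0 < K) by apply INR_fact_lt_0.
  assert (Hexp := pow_div_fact_le_exp (/ h) (j + 2) (Rlt_le _ _ (Rinv_0_lt_compat _ Hh))).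
  fold K in Hexp. rewrite pow_inv in Hexp.
  assert (Hhj : 0 < h ^ j) by (apply pow_lt; lra).
  assert (Hsplit : h ^ (j + 2) = h ^ j * h ^ 2) by apply pow_add.
  assert (He : / exp (/ h) <= K * h ^ (j + 2)).
  { assert (0 < exp (/ h)) by apply exp_pos.
    assert (0 < h ^ (j + 2)) by (apply pow_lt; lra).
    apply (Rmult_le_reg_l (exp (/ h))); auto. rewrite Rinv_r by lra.
    apply (Rmult_le_reg_l (/ h ^ (j + 2) / K)).
    - apply Rdiv_lt_0_compat; [apply Rinv_0_lt_compat|]; lra.
    - replace (/ h ^ (j + 2) / K * (exp (/ h) * (K * h ^ (j + 2)))) with (exp (/ h))
        by (field; lra). lra. }
  rewrite exp_Ropp, Hsplit in *.
  apply (Rmult_le_reg_r (h ^ j)); auto.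
  unfold Rdiv. rewrite Rmult_assoc, Rinv_l by lra. nra.
Qed.

Lemma is_derive_flat j x :
  is_derive (flat j) x (- INR j * flat (S j) x + flat (S (S j)) x).
Proof.
  destruct (Rlt_dec 0 x) as [Hx|Hx].
  - apply (is_derive_ext_loc (fun t => exp (- / t) / t ^ j)).
    + apply (locally_of_ball x x); [exact Hx|]. intros t Ht. apply Rabs_def2 in Ht.
      unfold flat. destruct (Rlt_dec 0 t); [reflexivity | lra].
    + unfold flat. destruct (Rlt_dec 0 x); [|lra].
      auto_derive; [repeat split; try lra; apply pow_nonzero; lra|].
      destruct j; [simpl; field; lra|].
      rewrite S_INR. simpl. field. split; [apply pow_nonzero|]; lra.
  - rewrite !flat_nonpos by lra. replace (- INR j * 0 + 0) with 0 by ring.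
    destruct (Req_dec x 0) as [->|Hneg].
    + (* the difference quotient at 0 is at most [K h] *)
      apply is_derive_Reals. intros eps Heps.
      set (K := INR (fact (j + 2))).
      assert (HK : 0 < K) by apply INR_fact_lt_0.
      exists (mkposreal (eps / K) (Rdiv_lt_0_compat _ _ Heps HK)).
      intros h Hh Hlt. simpl in Hlt.
      rewrite Rplus_0_l, (flat_nonpos j 0), !Rminus_0_r by lra.
      destruct (Rlt_dec 0 h) as [hpos|hneg].
      * assert (Hb := flat_le_sqr j h hpos). fold K in Hb.
        assert (Hn := flat_ge0 j h).
        rewrite Rabs_right in Hlt by lra.
        rewrite Rabs_right by (apply Rle_ge, Rdiv_le_0_compat; lra).
        apply (Rmult_lt_reg_r h); auto.
        unfold Rdiv. rewrite Rmult_assoc, Rinv_l, Rmult_1_r by lra.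
        assert (K * h < eps).
        { apply (Rmult_lt_reg_l (/ K)); [apply Rinv_0_lt_compat; lra|].
          rewrite <- Rmult_assoc, Rinv_l, Rmult_1_l by lra. unfold Rdiv in Hlt. lra. }
        simpl in Hb. nra.
      * rewrite flat_nonpos by lra. unfold Rdiv. rewrite Rmult_0_l, Rabs_R0. lra.
    + apply (is_derive_ext_loc (fun _ => 0)).
      * apply (locally_of_ball x (- x)); [lra|]. intros t Ht. apply Rabs_def2 in Ht.
        symmetry. apply flat_nonpos. lra.
      * apply (is_derive_const (K:=R_AbsRing) (V:=R_NormedModule) 0 x).
Qed.

(** * Smooth functions of one variable *)

Definition smooth (f : R -> R) : Prop :=
  exists S : (R -> R) -> Prop, S f /\
    forall g, S g -> exists g', (forall x, is_derive g x (g' x)) /\ S g'.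

Lemma smooth_derive f :
  smooth f -> exists f', (forall x, is_derive f x (f' x)) /\ smooth f'.
Proof.
  intros [S [Hf HS]]. destruct (HS f Hf) as [f' [Hd Hf']].
  exists f'. split; [exact Hd | exists S; split; assumption].
Qed.

Lemma smooth_Derive f :
  smooth f -> (forall x, is_derive f x (Derive f x)) /\ smooth (Derive f).
Proof.
  intros Hf. destruct (smooth_derive f Hf) as [f' [Hd Hf']].
  replace (Derive f) with f'; [split; assumption|].
  apply functional_extensionality. intros x. symmetry. apply is_derive_unique, Hd.
Qed.

Lemma smooth_continuous f x : smooth f -> continuous f x.
Proof.
  intros Hf. destruct (smooth_derive f Hf) as [f' [Hd _]].
  apply (ex_derive_continuous (K:=R_AbsRing) (V:=R_NormedModule)).
  exists (f' x). apply Hd.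
Qed.

Inductive ring_closure (B : (R -> R) -> Prop) : (R -> R) -> Prop :=
| rc_base g : B g -> ring_closure B g
| rc_const c : ring_closure B (fun _ => c)
| rc_plus f g : ring_closure B f -> ring_closure B g ->
    ring_closure B (fun x => f x + g x)
| rc_mult f g : ring_closure B f -> ring_closure B g ->
    ring_closure B (fun x => f x * g x).

Definition derive_closed (B : (R -> R) -> Prop) : Prop :=
  forall g, B g -> exists g', (forall x, is_derive g x (g' x)) /\ ring_closure B g'.

Lemma ring_closure_derive B : derive_closed B -> forall f, ring_closure B f ->
  exists f', (forall x, is_derive f x (f' x)) /\ ring_closure B f'.
Proof.
  intros HB f Hf. induction Hf as [g Hg | c | f g _ [f' [Hf Af]] _ [g' [Hg Ag]]
                                  | f g Rf [f' [Hf Af]] Rg [g' [Hg Ag]]].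
  - exact (HB g Hg).
  - exists (fun _ => 0). split; [intros x; apply (is_derive_const c x) | apply rc_const].
  - exists (fun x => f' x + g' x). split; [|apply rc_plus; assumption].
    intros x. apply (is_derive_plus f g x); auto.
  - exists (fun x => f' x * g x + f x * g' x). split.
    + intros x. apply (is_derive_mult f g x); auto. intros; apply Rmult_comm.
    + apply rc_plus; apply rc_mult; assumption.
Qed.

Lemma smooth_of_ring_closure B : derive_closed B ->
  forall f, ring_closure B f -> smooth f.
Proof. intros HB f Hf. exists (ring_closure B). split; [exact Hf | apply ring_closure_derive, HB]. Qed.

Lemma smooth_derive_closed : derive_closed smooth.
Proof.
  intros g Hg. destruct (smooth_derive g Hg) as [g' [Hd Hg']].
  exists g'. split; [exact Hd | apply rc_base, Hg'].
Qed.

Lemma smooth_const c : smooth (fun _ => c).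
Proof. apply (smooth_of_ring_closure smooth smooth_derive_closed), rc_const. Qed.

Lemma smooth_plus f g : smooth f -> smooth g -> smooth (fun x => f x + g x).
Proof.
  intros Hf Hg. apply (smooth_of_ring_closure smooth smooth_derive_closed).
  apply rc_plus; apply rc_base; assumption.
Qed.

Lemma smooth_mult f g : smooth f -> smooth g -> smooth (fun x => f x * g x).
Proof.
  intros Hf Hg. apply (smooth_of_ring_closure smooth smooth_derive_closed).
  apply rc_mult; apply rc_base; assumption.
Qed.

Lemma smooth_id : smooth (fun x => x).
Proof.
  apply (smooth_of_ring_closure (fun g => g = fun x => x)); [|now apply rc_base].
  intros g ->. exists (fun _ => 1). split; [intros x; apply (is_derive_id (K:=R_AbsRing)) | apply rc_const].
Qed.

Lemma smooth_comp f g : smooth f -> smooth g -> smooth (fun x => f (g x)).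
Proof.
  intros Hf Hg.
  set (B h := smooth h \/ exists f g, smooth f /\ smooth g /\ h = fun x => f (g x)).
  assert (HB : derive_closed B).
  { clear f g Hf Hg. intros h [Hh | [f [g [Hf [Hg ->]]]]].
    - destruct (smooth_derive h Hh) as [h' [Hd Hh']].
      exists h'. split; [exact Hd | apply rc_base; left; exact Hh'].
    - destruct (smooth_derive f Hf) as [f' [Hdf Hf']].
      destruct (smooth_derive g Hg) as [g' [Hdg Hg']].
      exists (fun x => f' (g x) * g' x). split.
      + intros x. eapply is_derive_eq; [apply (is_derive_comp f g x); auto|].
        apply Rmult_comm.
      + apply rc_mult; apply rc_base; [right; exists f', g; auto | left; exact Hg']. }
  apply (smooth_of_ring_closure B HB), rc_base. right. exists f, g. auto.
Qed.

Lemma smooth_inv f : smooth f -> (forall x, f x <> 0) -> smooth (fun x => / f x).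
Proof.
  intros Hf Hnz.
  set (B h := smooth h \/ exists f, smooth f /\ (forall x, f x <> 0) /\ h = fun x => / f x).
  assert (HB : derive_closed B).
  { clear f Hf Hnz. intros h [Hh | [f [Hf [Hnz ->]]]].
    - destruct (smooth_derive h Hh) as [h' [Hd Hh']].
      exists h'. split; [exact Hd | apply rc_base; left; exact Hh'].
    - destruct (smooth_derive f Hf) as [f' [Hdf Hf']].
      exists (fun x => (-1 * f' x) * (/ f x * / f x)). split.
      + intros x. eapply is_derive_eq; [apply is_derive_inv; auto|].
        specialize (Hnz x). field. exact Hnz.
      + assert (Hinv : ring_closure B (fun x => / f x)) by (apply rc_base; right; exists f; auto).
        apply (rc_mult _ (fun x => -1 * f' x) (fun x => / f x * / f x)).
        * apply (rc_mult _ (fun _ => -1) f'); [apply rc_const | apply rc_base; left; exact Hf'].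
        * apply (rc_mult _ (fun x => / f x) (fun x => / f x)); exact Hinv. }
  apply (smooth_of_ring_closure B HB), rc_base. right. exists f. auto.
Qed.

Lemma cos_sin_derive_closed : derive_closed (fun g => g = cos \/ g = sin).
Proof.
  intros g [-> | ->].
  - exists (fun x => -1 * sin x). split.
    + intros x. eapply is_derive_eq; [apply is_derive_cos | ring].
    + apply (rc_mult _ (fun _ => -1) sin); [apply rc_const | apply rc_base; right; reflexivity].
  - exists cos. split; [apply is_derive_sin | apply rc_base; left; reflexivity].
Qed.

Lemma smooth_cos : smooth cos.
Proof. apply (smooth_of_ring_closure _ cos_sin_derive_closed), rc_base. now left. Qed.

Lemma smooth_sin : smooth sin.
Proof. apply (smooth_of_ring_closure _ cos_sin_derive_closed), rc_base. now right. Qed.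

Lemma smooth_flat j : smooth (flat j).
Proof.
  apply (smooth_of_ring_closure (fun g => exists j, g = flat j)); [|apply rc_base; exists j; reflexivity].
  intros g [i ->]. exists (fun x => - INR i * flat (S i) x + flat (S (S i)) x). split.
  - apply is_derive_flat.
  - apply (rc_plus _ (fun x => - INR i * flat (S i) x) (flat (S (S i)))).
    + apply (rc_mult _ (fun _ => - INR i) (flat (S i))); [apply rc_const|].
      apply rc_base. exists (S i). reflexivity.
    + apply rc_base. exists (S (S i)). reflexivity.
Qed.

(** * A smooth partition of unity on the circle *)

Lemma cos_2PI_periodic x : cos (2 * PI * (x + 1)) = cos (2 * PI * x).
Proof.
  replace (2 * PI * (x + 1)) with (2 * PI * x + 2 * INR 1 * PI) by (simpl; ring).
  apply cos_period.
Qed.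

Lemma smooth_cos_2PI (s : R) : smooth (fun x => s * cos (2 * PI * x)).
Proof.
  apply (smooth_mult (fun _ => s)); [apply smooth_const|].
  apply (smooth_comp cos (fun x => 2 * PI * x)); [apply smooth_cos|].
  apply (smooth_mult (fun _ => 2 * PI)); [apply smooth_const | apply smooth_id].
Qed.

(* [cos_peak 1] is a neighbourhood of the integers, [cos_peak (-1)] one of the
   half-integers. *)
Definition cos_peak (s x : R) : Prop := 1/2 < s * cos (2 * PI * x).

Definition cutoff (s x : R) : R := flat 0 (1/2 + - s * cos (2 * PI * x)).

Lemma smooth_cutoff s : smooth (cutoff s).
Proof.
  apply (smooth_comp (flat 0) (fun x => 1/2 + - s * cos (2 * PI * x))); [apply smooth_flat|].
  apply (smooth_plus (fun _ => 1/2)); [apply smooth_const | apply smooth_cos_2PI].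
Qed.

Lemma cutoff_zero s x : 1/2 <= s * cos (2 * PI * x) -> cutoff s x = 0.
Proof. intros H. apply flat_nonpos. lra. Qed.

Lemma cutoff_ge0 s x : 0 <= cutoff s x.
Proof. apply flat_ge0. Qed.

Lemma cutoff_sum_pos x : 0 < cutoff 1 x + cutoff (-1) x.
Proof.
  assert (H1 := cutoff_ge0 1 x). assert (H2 := cutoff_ge0 (-1) x).
  destruct (Rle_dec (cos (2 * PI * x)) 0).
  - enough (0 < cutoff 1 x) by lra. apply flat_pos. lra.
  - enough (0 < cutoff (-1) x) by lra. apply flat_pos. lra.
Qed.

Lemma cutoff_periodic s x : cutoff s (x + 1) = cutoff s x.
Proof. unfold cutoff. rewrite cos_2PI_periodic. reflexivity. Qed.

(* Goes from [0] near the half-integers to [1] near the integers. *)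
Definition weight (x : R) : R := cutoff (-1) x / (cutoff 1 x + cutoff (-1) x).

Definition pu_cos (x : R) : R := cos (PI / 2 * weight x).
Definition pu_sin (x : R) : R := sin (PI / 2 * weight x).

Lemma smooth_weight : smooth weight.
Proof.
  apply (smooth_mult (cutoff (-1))); [apply smooth_cutoff|].
  apply (smooth_inv (fun x => cutoff 1 x + cutoff (-1) x)).
  - apply smooth_plus; apply smooth_cutoff.
  - intros x. apply Rgt_not_eq, cutoff_sum_pos.
Qed.

Lemma smooth_pu_cos : smooth pu_cos.
Proof.
  apply (smooth_comp cos (fun x => PI / 2 * weight x)); [apply smooth_cos|].
  apply (smooth_mult (fun _ => PI / 2)); [apply smooth_const | apply smooth_weight].
Qed.

Lemma smooth_pu_sin : smooth pu_sin.
Proof.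
  apply (smooth_comp sin (fun x => PI / 2 * weight x)); [apply smooth_sin|].
  apply (smooth_mult (fun _ => PI / 2)); [apply smooth_const | apply smooth_weight].
Qed.

Lemma pu_cos_zero x : cos_peak 1 x -> pu_cos x = 0.
Proof.
  unfold cos_peak. intros H. unfold pu_cos, weight. rewrite (cutoff_zero 1) by lra.
  rewrite Rplus_0_l, Rdiv_diag by (assert (H0 := cutoff_sum_pos x);
    rewrite (cutoff_zero 1) in H0; lra).
  rewrite Rmult_1_r. apply cos_PI2.
Qed.

Lemma pu_sin_zero x : cos_peak (-1) x -> pu_sin x = 0.
Proof.
  unfold cos_peak. intros H. unfold pu_sin, weight. rewrite (cutoff_zero (-1)) by lra.
  unfold Rdiv. rewrite !Rmult_0_l, Rmult_0_r. apply sin_0.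
Qed.

Lemma pu_sqr x : pu_cos x * pu_cos x + pu_sin x * pu_sin x = 1.
Proof.
  unfold pu_cos, pu_sin. rewrite Rplus_comm. apply sin2_cos2.
Qed.

Lemma pu_cos_periodic x : pu_cos (x + 1) = pu_cos x.
Proof. unfold pu_cos, weight. rewrite !cutoff_periodic. reflexivity. Qed.

Lemma pu_sin_periodic x : pu_sin (x + 1) = pu_sin x.
Proof. unfold pu_sin, weight. rewrite !cutoff_periodic. reflexivity. Qed.

Lemma pu_cos_bound x : Rabs (pu_cos x) <= 1.
Proof. apply Rabs_le, COS_bound. Qed.

Lemma pu_sin_bound x : Rabs (pu_sin x) <= 1.
Proof. apply Rabs_le, SIN_bound. Qed.

(** * Homogeneous elements of D_0 *)

Lemma sum_seq_zero (b : nat -> C) s len :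
  (forall k, (s <= k < s + len)%nat -> b k = 0%C) ->
  fold_right Cplus 0%C (map b (seq s len)) = 0%C.
Proof.
  revert s. induction len as [|len IH]; intros s Hb; simpl; [reflexivity|].
  rewrite Hb, IH by (intros; apply Hb; lia) || lia. apply Cplus_0_l.
Qed.

Lemma sum_seq_single (b : nat -> C) k0 s len :
  (forall k, k <> k0 -> b k = 0%C) -> (s <= k0 < s + len)%nat ->
  fold_right Cplus 0%C (map b (seq s len)) = b k0.
Proof.
  intros Hb. revert s. induction len as [|len IH]; intros s Hs; simpl; [lia|].
  destruct (Nat.eq_dec s k0) as [<-|Hne].
  - rewrite sum_seq_zero by (intros k Hk; apply Hb; lia). apply Cplus_0_r.
  - rewrite Hb, IH by lia. apply Cplus_0_l.
Qed.

Lemma qh_zsum_single (a : Z -> C) q0 N :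
  (forall q, q <> q0 -> a q = 0%C) -> ((Z.abs q0 <= Z.of_nat N)%Z \/ a q0 = 0%C) ->
  qh_zsum N a = a q0.
Proof.
  intros Ha [Hq|Hq0]; unfold qh_zsum.
  - rewrite (sum_seq_single _ (Z.to_nat (q0 + Z.of_nat N))); [| |lia].
    + f_equal. lia.
    + intros k Hk. apply Ha. lia.
  - rewrite sum_seq_zero; [now rewrite Hq0|].
    intros k _. destruct (Z.eq_dec (Z.of_nat k - Z.of_nat N) q0) as [->|Hne]; auto.
Qed.

Definition concentrated (n : Z) (F : HFun) : Prop :=
  forall x y p, p <> n -> F x y p = 0%C.

Lemma concentrated_finite_support n F : concentrated n F ->
  exists N : nat, forall x y q, (Z.of_nat N < Z.abs q)%Z -> F x y q = 0%C.
Proof. intros HF. exists (Z.abs_nat n). intros x y q Hq. apply HF. lia. Qed.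

Lemma qh_supp_bound_spec n F : concentrated n F ->
  forall x y q, (Z.of_nat (qh_supp_bound F) < Z.abs q)%Z -> F x y q = 0%C.
Proof.
  intros HF. unfold qh_supp_bound.
  apply (epsilon_spec (inhabits 0%nat) _ (concentrated_finite_support n F HF)).
Qed.

Lemma qh_star_concentrated mu nu n F :
  concentrated n F -> concentrated (- n) (qh_star mu nu F).
Proof.
  intros HF x y p Hp. unfold qh_star. rewrite HF by lia.
  apply injective_projections; simpl; ring.
Qed.

Lemma qh_mul_concentrated mu nu n1 n2 F1 F2 x y p :
  concentrated n1 F1 -> concentrated n2 F2 ->
  qh_mul mu nu F1 F2 x y p =
    if Z.eq_dec p (n1 + n2)
    then Cmult (F1 x y n1) (F2 (x - 2 * IZR n1 * mu) (y - 2 * IZR n1 * nu) n2)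
    else 0%C.
Proof.
  intros H1 H2. unfold qh_mul. rewrite (qh_zsum_single _ n1).
  - destruct (Z.eq_dec p (n1 + n2)) as [->|Hp].
    + now replace (n1 + n2 - n1)%Z with n2 by lia.
    + rewrite H2 by lia. apply Cmult_0_r.
  - intros q Hq. rewrite H1 by exact Hq. apply Cmult_0_l.
  - destruct (Z_le_gt_dec (Z.abs n1) (Z.of_nat (qh_supp_bound F1))) as [Hle|Hgt];
      [now left | right].
    rewrite (qh_supp_bound_spec n1 F1 H1) by lia. apply Cmult_0_l.
Qed.

Lemma qh_one_eq x y p : qh_one x y p = if Z.eq_dec p 0 then 1%C else 0%C.
Proof.
  unfold qh_one. destruct (Z.eq_dec p 0) as [->|Hp]; [reflexivity|].
  now rewrite (proj2 (Z.eqb_neq p 0) Hp).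
Qed.

Section UnitPairs.

Variables (mu nu : R) (n : Z) (F1 F2 : HFun).
Hypothesis F1_concentrated : concentrated n F1.
Hypothesis F2_concentrated : concentrated n F2.
Hypothesis sum_norm2_one : forall x y,
  Cplus (Cmult (Cconj (F1 x y n)) (F1 x y n)) (Cmult (Cconj (F2 x y n)) (F2 x y n)) = 1%C.

Lemma qh_star_mul_sum_one :
  qh_add (qh_mul mu nu (qh_star mu nu F1) F1) (qh_mul mu nu (qh_star mu nu F2) F2) = qh_one.
Proof.
  apply functional_extensionality; intros x; apply functional_extensionality; intros y;
    apply functional_extensionality; intros p.
  unfold qh_add. rewrite qh_one_eq.
  rewrite !(qh_mul_concentrated mu nu (- n) n) by (apply qh_star_concentrated || idtac; assumption).
  replace (- n + n)%Z with 0%Z by lia.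
  destruct (Z.eq_dec p 0); [|apply Cplus_0_l].
  unfold qh_star. rewrite Z.opp_involutive. apply sum_norm2_one.
Qed.

Lemma qh_mul_star_sum_one :
  qh_add (qh_mul mu nu F1 (qh_star mu nu F1)) (qh_mul mu nu F2 (qh_star mu nu F2)) = qh_one.
Proof.
  apply functional_extensionality; intros x; apply functional_extensionality; intros y;
    apply functional_extensionality; intros p.
  unfold qh_add. rewrite qh_one_eq.
  rewrite !(qh_mul_concentrated mu nu n (- n)) by (apply qh_star_concentrated || idtac; assumption).
  replace (n + - n)%Z with 0%Z by lia.
  destruct (Z.eq_dec p 0); [|apply Cplus_0_l].
  unfold qh_star. rewrite Z.opp_involutive, opp_IZR.
  replace (x - 2 * IZR n * mu - 2 * - IZR n * mu) with x by ring.
  replace (y - 2 * IZR n * nu - 2 * - IZR n * nu) with y by ring.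
  rewrite (Cmult_comm (F1 x y n)), (Cmult_comm (F2 x y n)). apply sum_norm2_one.
Qed.

End UnitPairs.

(** * Waves with piecewise constant frequency *)

Lemma qh_e_add s t : qh_e (s + t) = Cmult (qh_e s) (qh_e t).
Proof.
  unfold qh_e. rewrite Rmult_plus_distr_l, cos_plus, sin_plus.
  apply injective_projections; simpl; ring.
Qed.

Lemma qh_e_int t (z : Z) : qh_e (t + IZR z) = qh_e t.
Proof.
  unfold qh_e. destruct (Z_le_gt_dec 0 z) as [Hz|Hz].
  - replace (2 * PI * (t + IZR z)) with (2 * PI * t + 2 * INR (Z.to_nat z) * PI)
      by (rewrite INR_IZR_INZ, Z2Nat.id by exact Hz; ring).
    now rewrite cos_period, sin_period.
  - replace (2 * PI * t) with (2 * PI * (t + IZR z) + 2 * INR (Z.to_nat (- z)) * PI)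
      by (rewrite INR_IZR_INZ, Z2Nat.id, opp_IZR by lia; ring).
    now rewrite cos_period, sin_period.
Qed.

Lemma cos_2PI_int (z : Z) : cos (2 * PI * IZR z) = 1.
Proof.
  replace (IZR z) with (0 + IZR z) by ring.
  change (fst (qh_e (0 + IZR z)) = 1). rewrite qh_e_int. simpl. rewrite Rmult_0_r. apply cos_0.
Qed.

Lemma Cconj_scal_e_mult a t :
  Cmult (Cconj (Cmult (RtoC a) (qh_e t))) (Cmult (RtoC a) (qh_e t)) = RtoC (a * a).
Proof.
  unfold qh_e. assert (E := sin2_cos2 (2 * PI * t)). unfold Rsqr in E.
  apply injective_projections; simpl; [|ring].
  transitivity (a * a * (sin (2 * PI * t) * sin (2 * PI * t) + cos (2 * PI * t) * cos (2 * PI * t)));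
    [ring | rewrite E; ring].
Qed.

Lemma qh_Ck_of_derive_closed (S : (R -> R -> R) -> Prop) :
  (forall g, S g -> forall x y, continuous (fun z : R * R => g (fst z) (snd z)) (x, y)) ->
  (forall g, S g -> exists g1 g2 : R -> R -> R,
      (forall x y, is_derive (fun t => g t y) x (g1 x y)) /\
      (forall x y, is_derive (fun t => g x t) y (g2 x y)) /\ S g1 /\ S g2) ->
  forall k g, S g -> qh_Ck k g.
Proof.
  intros Hcont Hder k. induction k as [|k IHk]; intros g Hg; simpl; split; auto.
  destruct (Hder g Hg) as [g1 [g2 [H1 [H2 [S1 S2]]]]].
  exists g1, g2. auto.
Qed.

Lemma locally_fst (x y : R) (P : R -> Prop) :
  locally x P -> locally (x, y) (fun z : R * R => P (fst z)).
Proof. intros [e He]. exists e. intros [a b] [Ha _]. exact (He a Ha). Qed.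

Lemma continuous_fst_comp (f : R -> R) x y :
  continuous f x -> continuous (fun z : R * R => f (fst z)) (x, y).
Proof. intros Hf. apply (continuous_comp fst f); [apply continuous_fst | exact Hf]. Qed.

Lemma continuous_affine2 (a b c x y : R) :
  continuous (fun z : R * R => a * fst z + b * snd z + c) (x, y).
Proof.
  apply (continuous_plus (V:=R_NormedModule)); [|apply continuous_const].
  apply (continuous_plus (V:=R_NormedModule));
    apply (continuous_mult (K:=R_AbsRing)); try apply continuous_const.
  - apply continuous_fst.
  - apply continuous_snd.
Qed.

Lemma continuous_cos x : continuous cos x.
Proof.
  apply (ex_derive_continuous (K:=R_AbsRing) (V:=R_NormedModule)).
  exists (- sin x). apply is_derive_cos.
Qed.

(* The phases [a0 x - m floor(x + del) y] are only piecewise smooth; they are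
   multiplied by smooth amplitudes vanishing on an open set [zero_set] that contains
   every jump of the floor. *)
Section Waves.

Variables (del a0 m : R) (zero_set : R -> Prop).
Hypothesis zero_set_open : forall x, zero_set x -> locally x zero_set.
Hypothesis floor_locally_const : forall x, ~ zero_set x ->
  locally x (fun t => Zfloor (t + del) = Zfloor (x + del)).

Definition floor_shift (x : R) : R := IZR (Zfloor (x + del)).

Definition phase (x y : R) : R := a0 * x - m * floor_shift x * y.

Definition amplitude (v : R -> R) : Prop := smooth v /\ forall x, zero_set x -> v x = 0.

Lemma amplitude_locally_zero v x : amplitude v -> zero_set x -> locally x (fun t => v t = 0).
Proof.
  intros [_ Hv] Hx. eapply filter_imp; [|exact (zero_set_open x Hx)]. exact Hv.
Qed.

Lemma amplitude_Derive v : amplitude v -> amplitude (Derive v).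
Proof.
  intros Hv. split; [apply smooth_Derive, Hv|].
  intros x Hx. apply is_derive_unique.
  apply (is_derive_ext_loc (fun _ => 0)).
  - eapply filter_imp; [|exact (amplitude_locally_zero v x Hv Hx)].
    intros t Ht. simpl. now rewrite Ht.
  - apply (is_derive_const (K:=R_AbsRing) (V:=R_NormedModule) 0 x).
Qed.

Record wave := Wave { wave_coef : R; wave_deg : nat; wave_shift : R; wave_amp : R -> R }.

Definition wave_val (w : wave) (x y : R) : R :=
  wave_coef w * floor_shift x ^ wave_deg w * cos (2 * PI * phase x y + wave_shift w)
  * wave_amp w x.

Definition frozen_wave_val (w : wave) (x0 x y : R) : R :=
  wave_coef w * floor_shift x0 ^ wave_deg w
  * cos (2 * PI * (a0 * x - m * floor_shift x0 * y) + wave_shift w) * wave_amp w x.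

Lemma wave_locally_frozen w x0 : ~ zero_set x0 ->
  locally x0 (fun x => forall y, wave_val w x y = frozen_wave_val w x0 x y).
Proof.
  intros Hx0. eapply filter_imp; [|exact (floor_locally_const x0 Hx0)].
  intros x Hx y. unfold wave_val, frozen_wave_val, phase, floor_shift. now rewrite Hx.
Qed.

Lemma wave_locally_zero w x0 : amplitude (wave_amp w) -> zero_set x0 ->
  locally x0 (fun x => forall y, wave_val w x y = 0).
Proof.
  intros Hw Hx0. eapply filter_imp; [|exact (amplitude_locally_zero _ x0 Hw Hx0)].
  intros x Hx y. unfold wave_val. rewrite Hx. ring.
Qed.

Lemma continuous_wave w x y : amplitude (wave_amp w) ->
  continuous (fun z : R * R => wave_val w (fst z) (snd z)) (x, y).
Proof.
  intros Hw. destruct (classic (zero_set x)) as [Hx|Hx].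
  - apply (continuous_ext_loc _ (fun _ => 0)); [|apply continuous_const].
    eapply filter_imp; [|exact (locally_fst x y _ (wave_locally_zero w x Hw Hx))].
    intros z Hz. simpl. now rewrite Hz.
  - apply (continuous_ext_loc _ (fun z : R * R => frozen_wave_val w x (fst z) (snd z))).
    { eapply filter_imp; [|exact (locally_fst x y _ (wave_locally_frozen w x Hx))].
      intros z Hz. simpl. now rewrite Hz. }
    unfold frozen_wave_val. set (F := floor_shift x).
    apply (continuous_mult (K:=R_AbsRing)).
    + apply (continuous_mult (K:=R_AbsRing)); [apply continuous_const|].
      apply (continuous_ext (fun z : R * R =>
        cos ((2 * PI * a0) * fst z + (- (2 * PI * m * F)) * snd z + wave_shift w))).
      { intros z. f_equal. ring. }
      apply (continuous_comp (fun z : R * R => _ * fst z + _ * snd z + _) cos).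
      * apply continuous_affine2.
      * apply continuous_cos.
    + apply continuous_fst_comp, smooth_continuous, Hw.
Qed.

Definition wave_dy (w : wave) : wave :=
  Wave (wave_coef w * (-2 * PI * m)) (S (wave_deg w)) (wave_shift w + PI / 2) (wave_amp w).

Definition wave_dx_phase (w : wave) : wave :=
  Wave (wave_coef w * (2 * PI * a0)) (wave_deg w) (wave_shift w + PI / 2) (wave_amp w).

Definition wave_dx_amp (w : wave) : wave :=
  Wave (wave_coef w) (wave_deg w) (wave_shift w) (Derive (wave_amp w)).

Lemma is_derive_wave_y w x y :
  is_derive (fun t => wave_val w x t) y (wave_val (wave_dy w) x y).
Proof.
  unfold wave_val, wave_dy, phase. simpl. set (F := floor_shift x).
  auto_derive; [easy|]. unfold Rminus. rewrite <- Rplus_assoc, cos_plus, cos_PI2, sin_PI2. ring.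
Qed.

Lemma is_derive_wave_x w x y : amplitude (wave_amp w) ->
  is_derive (fun t => wave_val w t y) x
    (wave_val (wave_dx_phase w) x y + wave_val (wave_dx_amp w) x y).
Proof.
  intros Hw. destruct (classic (zero_set x)) as [Hx|Hx].
  - assert (Hv : wave_amp w x = 0) by exact (proj2 Hw x Hx).
    assert (Hdv : Derive (wave_amp w) x = 0) by exact (proj2 (amplitude_Derive _ Hw) x Hx).
    replace (_ + _) with 0 by (unfold wave_val; simpl; rewrite Hv, Hdv; ring).
    apply (is_derive_ext_loc (fun _ => 0)).
    + eapply filter_imp; [|exact (wave_locally_zero w x Hw Hx)]. intros t Ht. simpl. now rewrite Ht.
    + apply (is_derive_const (K:=R_AbsRing) (V:=R_NormedModule) 0 x).
  - apply (is_derive_ext_loc (fun t => frozen_wave_val w x t y)).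
    { eapply filter_imp; [|exact (wave_locally_frozen w x Hx)]. intros t Ht. now rewrite Ht. }
    unfold frozen_wave_val, wave_val, wave_dx_phase, wave_dx_amp, phase. simpl.
    set (F := floor_shift x).
    assert (Hc : is_derive (fun t => wave_coef w * F ^ wave_deg w
                   * cos (2 * PI * (a0 * t - m * F * y) + wave_shift w)) x
                 (wave_coef w * (2 * PI * a0) * F ^ wave_deg w
                   * cos (2 * PI * (a0 * x - m * F * y) + (wave_shift w + PI / 2)))).
    { auto_derive; [easy|]. unfold Rminus. rewrite <- Rplus_assoc, cos_plus, cos_PI2, sin_PI2. ring. }
    assert (Hv := proj1 (smooth_Derive _ (proj1 Hw)) x).
    eapply is_derive_eq; [exact (is_derive_mult _ _ x _ _ Hc Hv Rmult_comm)|].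
    unfold plus, mult. simpl. ring.
Qed.

Definition waves_val (L : list wave) (x y : R) : R :=
  fold_right (fun w acc => wave_val w x y + acc) 0 L.

Definition waves_dx (L : list wave) : list wave :=
  flat_map (fun w => wave_dx_phase w :: wave_dx_amp w :: nil) L.

Definition wave_amplitudes (L : list wave) : Prop :=
  Forall (fun w => amplitude (wave_amp w)) L.

Lemma wave_amplitudes_dy L : wave_amplitudes L -> wave_amplitudes (map wave_dy L).
Proof. intros HL. induction HL; constructor; auto. Qed.

Lemma wave_amplitudes_dx L : wave_amplitudes L -> wave_amplitudes (waves_dx L).
Proof.
  intros HL. induction HL as [|w L Hw _ IH]; simpl; [constructor|].
  constructor; [exact Hw|]. constructor; [apply amplitude_Derive, Hw | exact IH].
Qed.

Definition wave_sum (g : R -> R -> R) : Prop :=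
  exists L, wave_amplitudes L /\ g = waves_val L.

Lemma qh_Ck_wave_sum k g : wave_sum g -> qh_Ck k g.
Proof.
  apply qh_Ck_of_derive_closed; intros ? [L [HL ->]].
  - intros x y. induction HL as [|w L Hw _ IH]; simpl; [apply continuous_const|].
    apply (continuous_plus (V:=R_NormedModule)); [apply continuous_wave, Hw | exact IH].
  - exists (waves_val (waves_dx L)), (waves_val (map wave_dy L)).
    split; [|split; [|split]].
    + intros x y. induction HL as [|w L Hw _ IH]; simpl.
      * apply (is_derive_const (K:=R_AbsRing) (V:=R_NormedModule) 0 x).
      * eapply is_derive_eq;
          [apply (is_derive_plus (fun t => wave_val w t y) (fun t => waves_val L t y));
           [apply is_derive_wave_x, Hw | exact IH]|].
        unfold plus. simpl. ring.
    + intros x y. induction HL as [|w L Hw _ IH]; simpl.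
      * apply (is_derive_const (K:=R_AbsRing) (V:=R_NormedModule) 0 y).
      * apply (is_derive_plus (fun t => wave_val w x t) (fun t => waves_val L x t));
          [apply is_derive_wave_y | exact IH].
    + exists (waves_dx L). split; [apply wave_amplitudes_dx, HL | reflexivity].
    + exists (map wave_dy L). split; [apply wave_amplitudes_dy, HL | reflexivity].
Qed.


Definition wave_elt (n : Z) (u : R -> R) : HFun := fun x y p =>
  if Z.eq_dec p n then Cmult (RtoC (u x)) (qh_e (phase x y)) else 0%C.

Lemma wave_elt_concentrated n u : concentrated n (wave_elt n u).
Proof. intros x y p Hp. unfold wave_elt. now destruct (Z.eq_dec p n). Qed.

Lemma wave_elt_norm2 n u x y :
  Cmult (Cconj (wave_elt n u x y n)) (wave_elt n u x y n) = RtoC (u x * u x).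
Proof.
  unfold wave_elt. destruct (Z.eq_dec n n); [apply Cconj_scal_e_mult | congruence].
Qed.

Lemma wave_elt_smooth n u : amplitude u -> forall p, qh_smooth (fun x y => wave_elt n u x y p).
Proof.
  intros Hu p k. unfold wave_elt. destruct (Z.eq_dec p n) as [_|_];
    split; apply (qh_Ck_wave_sum k).
  - exists (Wave 1 0 0 u :: nil). split; [repeat constructor; apply Hu|].
    apply functional_extensionality; intros x; apply functional_extensionality; intros y.
    unfold waves_val, wave_val. simpl. rewrite !Rplus_0_r. ring.
  - exists (Wave 1 0 (- (PI / 2)) u :: nil). split; [repeat constructor; apply Hu|].
    apply functional_extensionality; intros x; apply functional_extensionality; intros y.
    unfold waves_val, wave_val. simpl.
    rewrite cos_plus, cos_neg, sin_neg, cos_PI2, sin_PI2. ring.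
  - exists nil. split; [constructor | reflexivity].
  - exists nil. split; [constructor | reflexivity].
Qed.

Lemma floor_shift_succ x : floor_shift (x + 1) = floor_shift x + 1.
Proof.
  unfold floor_shift. replace (x + 1 + del) with (x + del + IZR 1) by ring.
  now rewrite Zfloor_addz, plus_IZR.
Qed.

Lemma wave_elt_in_Dn c nu n u :
  a0 = IZR c * IZR n * IZR n * nu -> m = IZR c * IZR n ->
  amplitude u -> (forall x, Rabs (u x) <= 1) -> (forall x, u (x + 1) = u x) ->
  qh_in_Dn c nu n (wave_elt n u).
Proof.
  intros Ha0 Hm Hu Hbound Hper.
  split; [|apply wave_elt_concentrated]. split; [|split; [|split; [|split]]].
  - apply (concentrated_finite_support n), wave_elt_concentrated.
  - intros p x y. destruct (wave_elt_smooth n u Hu p 0%nat) as [[Hre _] [Him _]].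
    apply (continuous_ext (fun z : R * R =>
      (fst (wave_elt n u (fst z) (snd z) p), snd (wave_elt n u (fst z) (snd z) p)))).
    { intros z. symmetry. apply surjective_pairing. }
    apply (continuous_comp_2 _ _ (fun a b => (a, b) : C)); [apply Hre | apply Him|].
    intros P [eps HP]. exists eps. intros [a b] H. apply HP. exact H.
  - intros p. exists 1. intros x y. unfold wave_elt. destruct (Z.eq_dec p n).
    + rewrite Cmod_mult, Cmod_R.
      replace (Cmod (qh_e (phase x y))) with 1; [rewrite Rmult_1_r; apply Hbound|].
      unfold Cmod, qh_e. simpl. rewrite !Rmult_1_r, Rplus_comm.
      assert (E := sin2_cos2 (2 * PI * phase x y)). unfold Rsqr in E.
      now rewrite E, sqrt_1.
    + rewrite Cmod_0. lra.
  - intros x y p. unfold wave_elt. destruct (Z.eq_dec p n); [|reflexivity].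
    replace (phase x (y + 1)) with (phase x y + IZR (- (c * n * Zfloor (x + del))))
      by (unfold phase, floor_shift; rewrite Hm, opp_IZR, !mult_IZR; ring).
    now rewrite qh_e_int.
  - intros x y p. unfold wave_elt. destruct (Z.eq_dec p n) as [->|Hp].
    + rewrite Hper.
      replace (phase (x + 1) y) with (- IZR c * IZR n * (y - IZR n * nu) + phase x y)
        by (unfold phase; rewrite floor_shift_succ, Ha0, Hm; ring).
      rewrite qh_e_add. ring.
    + now rewrite Cmult_0_r.
Qed.

End Waves.

Lemma cos_peak_open s x : cos_peak s x -> locally x (cos_peak s).
Proof.
  intros Hx. apply (continuous_comp (fun t => 2 * PI * t) (fun u => s * cos u)).
  - apply (ex_derive_continuous (K:=R_AbsRing) (V:=R_NormedModule)). auto_derive. easy.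
  - apply (ex_derive_continuous (K:=R_AbsRing) (V:=R_NormedModule)). auto_derive. easy.
  - apply (locally_of_ball _ (s * cos (2 * PI * x) - 1/2)); [unfold cos_peak in Hx; lra|].
    intros t Ht. apply Rabs_def2 in Ht. unfold cos_peak. simpl. lra.
Qed.

Lemma Zfloor_locally_const t0 : IZR (Zfloor t0) <> t0 ->
  locally t0 (fun t => Zfloor t = Zfloor t0).
Proof.
  intros Hne. set (k := Zfloor t0).
  assert (Hk := Zfloor_bound t0). fold k in Hk, Hne.
  apply (locally_of_ball _ (Rmin (t0 - IZR k) (IZR k + 1 - t0))).
  - apply Rmin_glb_lt; lra.
  - intros t Ht. apply Zfloor_eq. apply Rabs_def2 in Ht.
    assert (H1 := Rmin_l (t0 - IZR k) (IZR k + 1 - t0)).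
    assert (H2 := Rmin_r (t0 - IZR k) (IZR k + 1 - t0)). lra.
Qed.

Lemma floor_locally_const_off_peak s del :
  (forall k : Z, cos_peak s (IZR k - del)) ->
  forall x, ~ cos_peak s x -> locally x (fun t => Zfloor (t + del) = Zfloor (x + del)).
Proof.
  intros Hpeak x Hx.
  assert (Hjump : IZR (Zfloor (x + del)) <> x + del).
  { intros E. apply Hx. replace x with (IZR (Zfloor (x + del)) - del) by lra. apply Hpeak. }
  destruct (Zfloor_locally_const (x + del) Hjump) as [e He].
  exists e. intros t Ht. apply He. unfold ball in *. simpl in *. unfold AbsRing_ball in *.
  unfold minus, plus, opp in *. simpl in *. now replace (t + del + - (x + del)) with (t + - x) by ring.
Qed.

Lemma cos_peak_int k : cos_peak 1 (IZR k - 0).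
Proof. unfold cos_peak. rewrite Rminus_0_r, cos_2PI_int. lra. Qed.

Lemma cos_peak_half_int k : cos_peak (-1) (IZR k - 1/2).
Proof.
  unfold cos_peak. replace (2 * PI * (IZR k - 1/2)) with (2 * PI * IZR k + - PI) by field.
  rewrite cos_plus, cos_2PI_int, cos_neg, sin_neg, cos_PI, sin_PI. lra.
Qed.

Lemma amplitude_pu_cos : amplitude (cos_peak 1) pu_cos.
Proof. split; [apply smooth_pu_cos | apply pu_cos_zero]. Qed.

Lemma amplitude_pu_sin : amplitude (cos_peak (-1)) pu_sin.
Proof. split; [apply smooth_pu_sin | apply pu_sin_zero]. Qed.

Theorem mainTheorem10 (c : Z) (mu nu : R) (hc : (0 < c)%Z) (n : Z) :
  exists xi1 xi2 : HFun,
    qh_in_Dn c nu n xi1 /\ qh_in_Dn c nu n xi2 /\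
    qh_add (qh_mul mu nu (qh_star mu nu xi1) xi1) (qh_mul mu nu (qh_star mu nu xi2) xi2) = qh_one /\
    qh_add (qh_mul mu nu xi1 (qh_star mu nu xi1)) (qh_mul mu nu xi2 (qh_star mu nu xi2)) = qh_one /\
    (forall p, qh_smooth (fun x y => xi1 x y p)) /\
    (forall p, qh_smooth (fun x y => xi2 x y p)).
Proof.
  (* The construction works for every integer [c]. *)
  set (a0 := IZR c * IZR n * IZR n * nu). set (m := IZR c * IZR n).
  assert (Hfl1 := floor_locally_const_off_peak 1 0 cos_peak_int).
  assert (Hfl2 := floor_locally_const_off_peak (-1) (1/2) cos_peak_half_int).
  exists (wave_elt 0 a0 m n pu_cos), (wave_elt (1/2) a0 m n pu_sin).
  assert (Hnorm : forall x y,
    Cplus (Cmult (Cconj (wave_elt 0 a0 m n pu_cos x y n)) (wave_elt 0 a0 m n pu_cos x y n))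
          (Cmult (Cconj (wave_elt (1/2) a0 m n pu_sin x y n)) (wave_elt (1/2) a0 m n pu_sin x y n))
    = 1%C).
  { intros x y. rewrite !wave_elt_norm2, <- RtoC_plus, pu_sqr. reflexivity. }
  split; [|split; [|split; [|split; [|split]]]].
  - apply (wave_elt_in_Dn _ _ _ _ (cos_peak_open 1) Hfl1); auto using amplitude_pu_cos,
      pu_cos_bound, pu_cos_periodic.
  - apply (wave_elt_in_Dn _ _ _ _ (cos_peak_open (-1)) Hfl2); auto using amplitude_pu_sin,
      pu_sin_bound, pu_sin_periodic.
  - apply (qh_star_mul_sum_one mu nu n); auto using wave_elt_concentrated.
  - apply (qh_mul_star_sum_one mu nu n); auto using wave_elt_concentrated.
  - apply (wave_elt_smooth _ _ _ _ (cos_peak_open 1) Hfl1), amplitude_pu_cos.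
  - apply (wave_elt_smooth _ _ _ _ (cos_peak_open (-1)) Hfl2), amplitude_pu_sin.
Qed.
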